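(* Assume the continuum hypothesis. Let $(\mathbb{R},\mathcal{C})$ be a category base such that: (a) it is point-meager; (b) it satisfies the countable chain condition; (c) $\mathcal{C}$ is linearly invariant; (d) $\operatorname{card}(\mathcal{C})\le 2^{\aleph_0}$; and (e) $\mathbb{R}$ is abundant in $(\mathbb{R},\mathcal{C})$. Then there exist sets $E,F\subseteq\mathbb{R}$ such that (i) both $E$ and $F$ are rare sets in the category base $(\mathbb{R},\mathcal{C})$; (ii) both $E$ and $F$ are vector spaces over the field $\mathbb{Q}$ of rational numbers (i.e. $\mathbb{Q}$-linear subspaces of $\mathbb{R}$); (iii) $\mathbb{R}=E+F=\{e+f:e\in E,\ f\in F\}$ and $E\cap F=\{0\}$.
   Context: A category base is a pair $(X,\mathcal{C})$ with $X$ a nonempty set and $\mathcal{C}$ a family of subsets of $X$ whose nonempty members (called regions) satisfy: (1) $X=\bigcup\mathcal{C}$; (2) for every region $A$ and every nonempty family $\mathcal{D}$ of pairwise disjoint regions with $\operatorname{card}(\mathcal{D})<\operatorname{card}(\mathcal{C})$: (i) if $A\cap\bigcup\mathcal{D}$ contains a region, then there is $D\in\mathcal{D}$ such that $A\cap D$ contains a region; (ii) if $A\cap\bigcup\mathcal{D}$ contains no region, then there is a region $B\subseteq A$ disjoint from every region in $\mathcal{D}$. A set $S\subseteq X$ is singular if every region contains a subregion disjoint from $S$; a set is meager if it is a countable union of singular sets, and abundant otherwise. The base is point-meager if every singleton is meager. It satisfies the countable chain condition (c.c.c.) if every family of pairwise disjoint regions is at most countable. For $X=\mathbb{R}$, $\mathcal{C}$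 is linearly invariant if for every $E\in\mathcal{C}$, every $r\in\mathbb{R}$ and every nonzero $\lambda\in\mathbb{R}$, the sets $E+r=\{x+r:x\in E\}$ and $\lambda E=\{\lambda x:x\in E\}$ belong to $\mathcal{C}$. A set $R\subseteq X$ is a rare set in $(X,\mathcal{C})$ if $R$ is uncountable and $R\cap M$ is countable for every meager set $M$ of $(X,\mathcal{C})$. *)

From Stdlib Require Import Reals QArith.
Open Scope R_scope.

Definition card_le {T U : Type} (A : T -> Prop) (B : U -> Prop) : Prop :=
  exists f : T -> U, (forall x, A x -> B (f x)) /\
    (forall x y, A x -> A y -> f x = f y -> x = y).

Definition card_lt {T U : Type} (A : T -> Prop) (B : U -> Prop) : Prop :=
  card_le A B /\ ~ card_le B A.

Definition countable {T : Type} (A : T -> Prop) : Prop :=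
  card_le A (fun _ : nat => True).

Definition CH : Prop :=
  forall S : R -> Prop, countable S \/ card_le (fun _ : R => True) S.

Definition family := (R -> Prop) -> Prop.

Definition subset (A B : R -> Prop) : Prop := forall x, A x -> B x.
Definition disjoint (A B : R -> Prop) : Prop := forall x, ~ (A x /\ B x).

Definition region (C : family) (A : R -> Prop) : Prop :=
  C A /\ exists x, A x.

Definition contains_region (C : family) (S : R -> Prop) : Prop :=
  exists B, region C B /\ subset B S.

Definition pairwise_disjoint (D : family) : Prop :=
  forall A B, D A -> D B -> A <> B -> disjoint A B.

Definition bigunion (D : family) : R -> Prop := fun x => exists A, D A /\ A x.

Definition category_base (C : family) : Prop :=
  (forall x : R, exists A, C A /\ A x) /\
  (forall A (D : family),
     region C A ->
     (exists B, D B) ->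
     (forall B, D B -> region C B) ->
     pairwise_disjoint D ->
     card_lt D C ->
     (contains_region C (fun x => A x /\ bigunion D x) ->
        exists B, D B /\ contains_region C (fun x => A x /\ B x)) /\
     (~ contains_region C (fun x => A x /\ bigunion D x) ->
        exists B, region C B /\ subset B A /\
          forall E, D E -> disjoint B E)).

Definition singular (C : family) (S : R -> Prop) : Prop :=
  forall A, region C A -> exists B, region C B /\ subset B A /\ disjoint B S.

Definition meager (C : family) (M : R -> Prop) : Prop :=
  exists S : nat -> (R -> Prop), (forall n, singular C (S n)) /\
    (forall x, M x <-> exists n, S n x).

Definition abundant (C : family) (S : R -> Prop) : Prop := ~ meager C S.

Definition point_meager (C : family) : Prop :=
  forall x : R, meager C (fun y => y = x).

Definition ccc (C : family) : Prop :=
  forall D : family, (forall A, D A -> region C A) -> pairwise_disjoint D ->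
    countable D.

Definition linearly_invariant (C : family) : Prop :=
  forall E, C E -> forall r lam : R, lam <> 0 ->
    C (fun y => exists x, E x /\ y = x + r) /\
    C (fun y => exists x, E x /\ y = lam * x).

Definition rare (C : family) (S : R -> Prop) : Prop :=
  ~ countable S /\
  forall M, meager C M -> countable (fun x => S x /\ M x).

Definition Q_subspace (E : R -> Prop) : Prop :=
  E 0 /\ (forall x y, E x -> E y -> E (x + y)) /\
  (forall (q : Q) x, E x -> E (Q2R q * x)).

(* Under CH, well-order R so that every proper initial segment is countable.  Since
   card C <= c and C satisfies the c.c.c., every singular set misses some countable disjoint
   family of regions whose union has a singular complement; coding such families by reals
   yields singular sets Sing t (t in R) that are cofinal among all singular sets, and
   Sing_upto t, the union of the Sing s with s <= t, is meager.  By transfinite recursion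
   choose x t, y t such that t lies in the span of all x s, y s with s <= t, each new
   point is Q-independent of the points chosen before, and no element of
   span{x s : s < t} + (Q \ {0}) x t (or its analogue for y) lies in Sing_upto t.  Such
   points exist: the bad choices form a countable union of affine preimages of a meager
   set, hence a meager set by linear invariance, while R is abundant.  Then E = span{x t} and F = span{y t} give E + F = R and
   E ∩ F = {0}, and the part of E inside Sing_upto t lies in the countable span{x s : s < t},
   so E (and likewise F) meets every meager set in a countable set. *)

From Stdlib Require Import Reals QArith.
From Stdlib Require Import ZArith Qreals Cantor Relations Wellfounded Classical
  ClassicalEpsilon FunctionalExtensionality PropExtensionality Lra Lia.
From mathcomp Require ssreflect ssrfun ssrbool eqtype boolp wochoice classical_sets.
Open Scope R_scope.

Module ChoicePrinciples.
Import ssreflect ssrfun ssrbool eqtype boolp wochoice classical_sets.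
Local Open Scope classical_set_scope.

Lemma well_ordering (T : Type) : exists W : T -> T -> Prop,
  (forall P : T -> Prop, (exists x, P x) -> exists z, P z /\ forall x, P x -> W z x) /\
  (forall x y, W x y -> W y x -> x = y).
Proof.
elim/Peq : T => T; have [W Wwo] := well_ordering_principle T.
have minP (P : T -> Prop) :
    (exists x, P x) -> exists! z, minimum_of W (fun z => `[< P z >]) z.
  by case=> x Px; apply: Wwo; exists x; apply/asboolP.
exists (fun x y => W x y); split.
  move=> P /minP [z [[/asboolP Pz lbz] _]]; exists z; split=> // x Px.
  by apply: lbz; apply/asboolP.
move=> x y Wxy Wyx.
have [|z [_ zU]] := minP (fun z => z = x \/ z = y); first by exists x; left.
have minimum w : W w x -> W w y -> w = x \/ w = y -> z = w.
  move=> Wwx Wwy wxy; apply: zU; split; first exact/asboolP.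
  by move=> v; rewrite inE => -[->|->].
have Wrefl u : W u u.
  have [v [[/asboolP -> lbv] _]] := minP (fun v => v = u) (ex_intro _ u erefl).
  by apply: lbv; rewrite inE.
by rewrite -(minimum x) ?(minimum y) //; [right|left].
Qed.

Lemma zorn_union (T : Type) (P : (T -> Prop) -> Prop) :
  (forall F : (T -> Prop) -> Prop, (forall X, F X -> P X) ->
     (forall X Y, F X -> F Y -> (forall a, X a -> Y a) \/ (forall a, Y a -> X a)) ->
     P (fun a => exists X, F X /\ X a)) ->
  exists A, P A /\ forall B, (forall a, A a -> B a) -> P B -> forall a, B a -> A a.
Proof.
move=> chainP; have [|A [PA Amax]] := Zorn_bigcup (P := P).
  move=> F FP Ftot.
  have -> : \bigcup_(X in F) X = (fun a => exists X, F X /\ X a).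
    by apply/funext => a; apply/propext; split=> [[X]|[X []]]; exists X.
  apply: chainP => [X /FP //|X Y FX FY].
  by case: (Ftot X Y FX FY) => XY; [left|right] => a /XY.
exists A; split=> // B AB PB a Ba; apply: contrapT => nAa.
by apply: (Amax B) => //; split=> // BA; apply: nAa; apply: BA.
Qed.

End ChoicePrinciples.

Definition rational (r : R) : Prop := exists q : Q, r = Q2R q.

Lemma rational0 : rational 0.
Proof. exists 0%Q. unfold Q2R; simpl; lra. Qed.

Lemma rational1 : rational 1.
Proof. exists 1%Q. unfold Q2R; simpl; lra. Qed.

Lemma rational_add r s : rational r -> rational s -> rational (r + s).
Proof. intros [a ->] [b ->]. exists (a + b)%Q. now rewrite Q2R_plus. Qed.

Lemma rational_mul r s : rational r -> rational s -> rational (r * s).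
Proof. intros [a ->] [b ->]. exists (a * b)%Q. now rewrite Q2R_mult. Qed.

Lemma rational_opp r : rational r -> rational (- r).
Proof. intros [a ->]. exists (- a)%Q. now rewrite Q2R_opp. Qed.

Lemma rational_inv r : rational r -> r <> 0 -> rational (/ r).
Proof.
  intros [a ->] Ha. exists (/ a)%Q. rewrite Q2R_inv; auto.
  intros E. apply Ha. rewrite (Qeq_eqR _ _ E). unfold Q2R; simpl; lra.
Qed.

Definition setU {T} (X Y : T -> Prop) : T -> Prop := fun v => X v \/ Y v.
Definition set1 {T} (a : T) : T -> Prop := fun v => v = a.
Definition img {A T} (w : A -> T) (P : A -> Prop) : T -> Prop :=
  fun v => exists s, P s /\ v = w s.
Definition image2 {A B T} (h : A -> B -> T) (X : A -> Prop) (Y : B -> Prop) : T -> Prop :=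
  fun z => exists a b, X a /\ Y b /\ z = h a b.

Inductive span (S : R -> Prop) : R -> Prop :=
| span0 : span S 0
| span_cons r v z : rational r -> S v -> span S z -> span S (r * v + z).

Lemma span_add S x y : span S x -> span S y -> span S (x + y).
Proof.
  induction 1 as [|r v z Hr Hv Hz IH]; intros Hy.
  - now rewrite Rplus_0_l.
  - replace (r * v + z + y) with (r * v + (z + y)) by ring. constructor; auto.
Qed.

Lemma span_scale S c x : rational c -> span S x -> span S (c * x).
Proof.
  intros Hc. induction 1 as [|r v z Hr Hv Hz IH].
  - rewrite Rmult_0_r. constructor.
  - replace (c * (r * v + z)) with (c * r * v + c * z) by ring.
    constructor; auto. now apply rational_mul.
Qed.

Lemma span_sub S x y : span S x -> span S y -> span S (x - y).
Proof.
  intros Hx Hy. apply span_add; auto.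
  replace (- y) with (-1 * y) by ring. apply span_scale; auto.
  apply rational_opp, rational1.
Qed.

Lemma span_incl S v : S v -> span S v.
Proof.
  intros Hv. replace v with (1 * v + 0) by ring.
  constructor; auto using rational1. constructor.
Qed.

Lemma span_mono (S T : R -> Prop) x : (forall v, S v -> T v) -> span S x -> span T x.
Proof. intros H. induction 1; constructor; auto. Qed.

Lemma span_setU X Y z :
  span (setU X Y) z <-> exists e g, span X e /\ span Y g /\ z = e + g.
Proof.
  split.
  - induction 1 as [|r v z Hr [Hv | Hv] Hz (e & g & He & Hg & ->)].
    + exists 0, 0. repeat split; try constructor. ring.
    + exists (r * v + e), g. repeat split; auto. constructor; auto. ring.
    + exists e, (r * v + g). repeat split; auto. constructor; auto. ring.
  - intros (e & g & He & Hg & ->).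
    apply span_add; [apply (span_mono X) | apply (span_mono Y)]; auto;
      intros v Hv; [left | right]; exact Hv.
Qed.

Lemma span_set1 a z : span (set1 a) z <-> exists r, rational r /\ z = r * a.
Proof.
  split.
  - induction 1 as [|r v z Hr -> Hz (q & Hq & ->)].
    + exists 0. split; [apply rational0 | ring].
    + exists (r + q). split; [now apply rational_add | ring].
  - intros (r & Hr & ->). apply span_scale; auto. now apply span_incl.
Qed.

Lemma span_setU1 X a z :
  span (setU X (set1 a)) z <-> exists e r, span X e /\ rational r /\ z = e + r * a.
Proof.
  rewrite span_setU. split.
  - intros (e & g & He & Hg & ->). apply span_set1 in Hg as (r & Hr & ->). eauto.
  - intros (e & r & He & Hr & ->). exists e, (r * a). rewrite span_set1. eauto.
Qed.

Lemma span_extend_trivial_meet X Y a b :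
  (forall z, span X z -> span Y z -> z = 0) ->
  ~ span (setU X Y) b -> ~ span (setU (setU X Y) (set1 b)) a ->
  forall z, span (setU X (set1 a)) z -> span (setU Y (set1 b)) z -> z = 0.
Proof.
  intros Hmeet Hb Ha z Hx Hy.
  apply span_setU1 in Hx as (e & r & He & Hr & ->).
  apply span_setU1 in Hy as (g & q & Hg & Hq & E).
  destruct (Req_dec r 0) as [-> | Hr0].
  - destruct (Req_dec q 0) as [-> | Hq0].
    + rewrite !Rmult_0_l, !Rplus_0_r in *. subst e. now apply Hmeet.
    + exfalso. apply Hb. apply span_setU.
      exists (/ q * e), (- / q * g). repeat split.
      * apply span_scale; auto. now apply rational_inv.
      * apply span_scale; auto. now apply rational_opp, rational_inv.
      * apply Rmult_eq_reg_l with q; auto. field_simplify; auto. lra.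
  - exfalso. apply Ha. apply span_setU1.
    exists (/ r * (g - e)), (q / r). repeat split.
    + apply span_scale; [now apply rational_inv|]. apply span_sub.
      * apply (span_mono Y); auto. intros v Hv; now right.
      * apply (span_mono X); auto. intros v Hv; now left.
    + apply rational_mul; auto. now apply rational_inv.
    + apply Rmult_eq_reg_l with r; auto. field_simplify; auto. lra.
Qed.

Definition enumerable {T} (A : T -> Prop) : Prop :=
  exists g : nat -> T, forall z, A z -> exists n, g n = z.

Lemma enumerable_countable {T} (A : T -> Prop) : enumerable A -> countable A.
Proof.
  intros [g Hg].
  exists (fun z => epsilon (inhabits O) (fun n => g n = z)). split; [auto|].
  intros x y Hx Hy E.
  pose proof (epsilon_spec (inhabits O) (fun n => g n = x) (Hg x Hx)) as Gx.
  pose proof (epsilon_spec (inhabits O) (fun n => g n = y) (Hg y Hy)) as Gy.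
  simpl in *. now rewrite <- Gx, <- Gy, E.
Qed.

Lemma countable_enumerable {T} (A : T -> Prop) : inhabited T -> countable A -> enumerable A.
Proof.
  intros i [h [_ Hh]].
  exists (fun n => epsilon i (fun z => A z /\ h z = n)).
  intros z Hz. exists (h z).
  destruct (epsilon_spec i (fun w => A w /\ h w = h z) (ex_intro _ z (conj Hz eq_refl)))
    as [H1 H2].
  now apply Hh.
Qed.

Lemma enumerable_exact {T} (A : T -> Prop) a0 : A a0 -> enumerable A ->
  exists g : nat -> T, (forall n, A (g n)) /\ forall z, A z -> exists n, g n = z.
Proof.
  intros Ha0 [g Hg].
  exists (fun n => if excluded_middle_informative (A (g n)) then g n else a0). split.
  - intros n. now destruct excluded_middle_informative.
  - intros z Hz. destruct (Hg z Hz) as [n <-]. exists n.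
    now destruct excluded_middle_informative.
Qed.

Lemma enumerable_subset {T} (A B : T -> Prop) :
  (forall z, A z -> B z) -> enumerable B -> enumerable A.
Proof. intros H [g Hg]. exists g. auto. Qed.

Lemma enumerable_bigcup {T} (A : nat -> T -> Prop) :
  (forall n, enumerable (A n)) -> enumerable (fun z => exists n, A n z).
Proof.
  intros H. destruct (choice _ H) as [G HG].
  exists (fun k => G (fst (of_nat k)) (snd (of_nat k))).
  intros z [n Hz]. destruct (HG n z Hz) as [m <-].
  exists (to_nat (n, m)). now rewrite cancel_of_to.
Qed.

Lemma enumerable_setU {T} (X Y : T -> Prop) :
  enumerable X -> enumerable Y -> enumerable (setU X Y).
Proof.
  intros HX HY.
  apply (enumerable_subset _ (fun z => exists n, (match n with O => X | _ => Y end) z)).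
  - intros z [Hz | Hz]; [now exists O | now exists 1%nat].
  - apply enumerable_bigcup. now intros [|n].
Qed.

Lemma enumerable_set1 {T} (a : T) : enumerable (set1 a).
Proof. exists (fun _ => a). intros z ->. now exists O. Qed.

Lemma enumerable_img {A T} (w : A -> T) P : enumerable P -> enumerable (img w P).
Proof.
  intros [g Hg]. exists (fun n => w (g n)). intros z (s & Hs & ->).
  destruct (Hg s Hs) as [n <-]. now exists n.
Qed.

Lemma enumerable_image2 {A B T} (h : A -> B -> T) X Y :
  enumerable X -> enumerable Y -> enumerable (image2 h X Y).
Proof.
  intros [g1 H1] [g2 H2].
  exists (fun k => h (g1 (fst (of_nat k))) (g2 (snd (of_nat k)))).
  intros z (a & b & Ha & Hb & ->).
  destruct (H1 a Ha) as [n <-], (H2 b Hb) as [m <-].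
  exists (to_nat (n, m)). now rewrite cancel_of_to.
Qed.

Definition int_enum (k : nat) : Z :=
  (Z.of_nat (fst (of_nat k)) - Z.of_nat (snd (of_nat k)))%Z.

Lemma int_enum_onto z : exists k, int_enum k = z.
Proof.
  exists (to_nat (Z.to_nat z, Z.to_nat (- z))).
  unfold int_enum. rewrite cancel_of_to. simpl. lia.
Qed.

Lemma enumerable_rational : enumerable rational.
Proof.
  apply (enumerable_subset _
    (image2 (fun z p => Q2R (Qmake z p)) (fun _ => True) (fun _ => True))).
  - intros r [[z p] ->]. now exists z, p.
  - apply enumerable_image2.
    + exists int_enum. intros z _. apply int_enum_onto.
    + exists Pos.of_nat. intros p _. exists (Pos.to_nat p). apply Pos2Nat.id.
Qed.

Fixpoint span_layer (S : R -> Prop) (n : nat) : R -> Prop :=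
  match n with
  | O => set1 0
  | Datatypes.S n => image2 Rplus (image2 Rmult rational S) (span_layer S n)
  end.

Lemma enumerable_span S : enumerable S -> enumerable (span S).
Proof.
  intros HS. apply (enumerable_subset _ (fun z => exists n, span_layer S n z)).
  - induction 1 as [|r v z Hr Hv Hz [n Hn]].
    + now exists O.
    + exists (Datatypes.S n), (r * v), z. repeat split; auto. now exists r, v.
  - apply enumerable_bigcup. induction n as [|n IH].
    + apply enumerable_set1.
    + apply enumerable_image2; auto. apply enumerable_image2; auto.
      apply enumerable_rational.
Qed.

Lemma up_scaled_inj x y : (forall n, up (x * INR n) = up (y * INR n)) -> x = y.
Proof.
  intros H. apply NNPP. intros Hxy.
  set (d := Rabs (x - y)).
  assert (Hd : 0 < d) by (apply Rabs_pos_lt; lra).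
  destruct (archimed (/ d)) as [Hup _].
  assert (Hz : (0 <= up (/ d))%Z).
  { apply le_IZR. pose proof (Rinv_0_lt_compat d Hd). lra. }
  set (n := Z.to_nat (up (/ d))).
  assert (Hn : INR n = IZR (up (/ d))).
  { unfold n. now rewrite INR_IZR_INZ, Z2Nat.id. }
  destruct (archimed (x * INR n)) as [Hx1 Hx2], (archimed (y * INR n)) as [Hy1 Hy2].
  rewrite (H n) in Hx1, Hx2.
  assert (Hlt : d * INR n < 1).
  { unfold d. rewrite <- (Rabs_pos_eq (INR n)) by apply pos_INR.
    rewrite <- Rabs_mult. apply Rabs_def1; lra. }
  assert (d * / d = 1) by (field; lra).
  assert (d * / d < d * INR n) by (apply Rmult_lt_compat_l; lra).
  lra.
Qed.

Fixpoint ternary_partial (b : nat -> bool) (n : nat) : R :=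
  match n with
  | O => 0
  | S n => ternary_partial b n + (if b n then 2 else 0) / 3 ^ S n
  end.

Lemma ternary_partial_bounds b n m : (n <= m)%nat ->
  ternary_partial b n <= ternary_partial b m <= ternary_partial b n + (/ 3 ^ n - / 3 ^ m).
Proof.
  induction 1 as [|m _ IH]; [lra|].
  assert (Hp : 0 < / 3 ^ S m) by (apply Rinv_0_lt_compat, pow_lt; lra).
  assert (E : / 3 ^ m - / 3 ^ S m = 2 * / 3 ^ S m).
  { assert (0 < 3 ^ m) by (apply pow_lt; lra). simpl. field. lra. }
  cbn [ternary_partial]. unfold Rdiv. destruct (b m); lra.
Qed.

Lemma ternary_partial_tail b n m : ternary_partial b m <= ternary_partial b n + / 3 ^ n.
Proof.
  assert (0 < / 3 ^ n) by (apply Rinv_0_lt_compat, pow_lt; lra).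
  destruct (Nat.le_ge_cases m n) as [Hmn | Hnm].
  - pose proof (ternary_partial_bounds b m n Hmn). lra.
  - pose proof (ternary_partial_bounds b n m Hnm).
    assert (0 < / 3 ^ m) by (apply Rinv_0_lt_compat, pow_lt; lra). lra.
Qed.

Lemma ternary_partial_agree b b' n :
  (forall k, (k < n)%nat -> b k = b' k) -> ternary_partial b n = ternary_partial b' n.
Proof.
  induction n as [|n IH]; intros H; [reflexivity|].
  cbn [ternary_partial]. rewrite IH by (intros k Hk; apply H; lia).
  now rewrite (H n) by lia.
Qed.

Definition ternary (b : nat -> bool) : R.
Proof.
  refine (proj1_sig (completeness (fun r => exists n, r = ternary_partial b n) _ _)).
  - exists 1. intros r [n ->]. pose proof (ternary_partial_tail b 0 n). simpl in *. lra.
  - exists 0, O. reflexivity.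
Defined.

Lemma ternary_spec b : (forall n, ternary_partial b n <= ternary b) /\
  (forall r, (forall n, ternary_partial b n <= r) -> ternary b <= r).
Proof.
  unfold ternary. destruct completeness as [s [Hub Hlub]]; simpl. split.
  - intros n. apply Hub. now exists n.
  - intros r Hr. apply Hlub. intros x [n ->]. apply Hr.
Qed.

(* Lexicographic comparison: digits 0 and 2 leave a gap that the tail cannot close. *)
Lemma ternary_lt b b' n : (forall k, (k < n)%nat -> b k = b' k) ->
  b n = true -> b' n = false -> ternary b' < ternary b.
Proof.
  intros Hagree Hb Hb'.
  assert (Hp : 0 < / 3 ^ S n) by (apply Rinv_0_lt_compat, pow_lt; lra).
  assert (E : ternary_partial b' n = ternary_partial b n)
    by (symmetry; now apply ternary_partial_agree).
  pose proof (proj1 (ternary_spec b) (S n)) as Hlow.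
  pose proof (proj2 (ternary_spec b') _ (fun m => ternary_partial_tail b' (S n) m)) as Hup.
  cbn [ternary_partial] in Hlow, Hup. rewrite Hb in Hlow. rewrite Hb', E in Hup.
  unfold Rdiv in *. lra.
Qed.

Lemma ternary_inj b b' : ternary b = ternary b' -> forall n, b n = b' n.
Proof.
  intros E n. induction n as [n IH] using lt_wf_ind.
  destruct (b n) eqn:H1, (b' n) eqn:H2; auto.
  - pose proof (ternary_lt b b' n IH H1 H2). lra.
  - pose proof (ternary_lt b' b n (fun k Hk => eq_sym (IH k Hk)) H2 H1). lra.
Qed.

Definition seq_bits (h : nat -> R) (m : nat) : bool :=
  let (i, p) := of_nat m in
  let (j, k) := of_nat p in
  Z.eqb (up (h i * INR j)) (int_enum k).

Lemma seq_bits_inj h h' : (forall m, seq_bits h m = seq_bits h' m) -> h = h'.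
Proof.
  intros H. apply functional_extensionality. intros i. apply up_scaled_inj. intros j.
  destruct (int_enum_onto (up (h i * INR j))) as [k Hk].
  specialize (H (to_nat (i, to_nat (j, k)))).
  unfold seq_bits in H. rewrite !cancel_of_to, Hk, Z.eqb_refl in H.
  symmetry in H. apply Z.eqb_eq in H. congruence.
Qed.

Lemma R_onto_sequences : exists dec : R -> nat -> R, forall h, exists t, dec t = h.
Proof.
  exists (fun t => epsilon (inhabits (fun _ => 0)) (fun h => ternary (seq_bits h) = t)).
  intros h. exists (ternary (seq_bits h)). apply seq_bits_inj, ternary_inj.
  apply (epsilon_spec (inhabits (fun _ : nat => 0)) (fun h' => ternary (seq_bits h') = _)).
  eauto.
Qed.

Section Meager.
Variable C : (R -> Prop) -> Prop.

Lemma family_ext (A B : R -> Prop) : C A -> (forall z, A z <-> B z) -> C B.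
Proof.
  intros HA E. replace B with A; auto.
  apply functional_extensionality; intro z. now apply propositional_extensionality.
Qed.

Lemma singular_subset (A B : R -> Prop) : (forall z, A z -> B z) -> singular C B -> singular C A.
Proof.
  intros H HB A0 HA0. destruct (HB A0 HA0) as (B0 & HB0 & HB0A & HB0B).
  exists B0. split; [exact HB0 | split; [exact HB0A |]].
  intros z [Hz Hz']. apply (HB0B z). auto.
Qed.

Lemma meager_subset (A B : R -> Prop) : (forall z, A z -> B z) -> meager C B -> meager C A.
Proof.
  intros H [S [HS HB]]. exists (fun n z => S n z /\ A z). split.
  - intros n. apply (singular_subset _ (S n)); [tauto | auto].
  - intros z. split.
    + intros Hz. destruct (proj1 (HB z) (H z Hz)) as [n Hn]. eauto.
    + intros [n [_ Hz]]. exact Hz.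
Qed.

Lemma singular_meager (S : R -> Prop) : singular C S -> meager C S.
Proof.
  intros H. exists (fun _ => S). split; auto.
  intros z. split; [exists O | intros [_ ?]]; auto.
Qed.

Lemma meager_bigcup (A : nat -> R -> Prop) :
  (forall n, meager C (A n)) -> meager C (fun z => exists n, A n z).
Proof.
  intros H. destruct (choice _ H) as [G HG].
  exists (fun k => G (fst (of_nat k)) (snd (of_nat k))). split.
  - intros k. apply HG.
  - intros z. split.
    + intros [n Hz]. destruct (proj1 (proj2 (HG n) z) Hz) as [m Hm].
      exists (to_nat (n, m)). now rewrite cancel_of_to.
    + intros [k Hk]. exists (fst (of_nat k)). apply (proj2 (HG _)). eauto.
Qed.

Lemma meager_setU (A B : R -> Prop) : meager C A -> meager C B -> meager C (setU A B).
Proof.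
  intros HA HB.
  apply (meager_subset _ (fun z => exists n, (match n with O => A | _ => B end) z)).
  - intros z [Hz | Hz]; [now exists O | now exists 1%nat].
  - apply meager_bigcup. now intros [|n].
Qed.

Hypothesis pm : point_meager C.

Lemma enumerable_meager (A : R -> Prop) : enumerable A -> meager C A.
Proof.
  intros [g Hg]. apply (meager_subset _ (fun z => exists n, z = g n)).
  - intros z Hz. destruct (Hg z Hz) as [n <-]. now exists n.
  - apply meager_bigcup. intros n. apply pm.
Qed.

Hypothesis li : linearly_invariant C.

Lemma affine_image_mem (A : R -> Prop) c d : C A -> c <> 0 -> C (img (fun x => c * x + d) A).
Proof.
  intros HA Hc.
  destruct (li A HA 0 c Hc) as [_ H1]. destruct (li _ H1 d 1 ltac:(lra)) as [H2 _].
  apply (family_ext _ _ H2). intros z. split.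
  - intros (w & (x & Hx & ->) & ->). now exists x.
  - intros (x & Hx & ->). exists (c * x). split; auto. now exists x.
Qed.

Lemma singular_affine_preimage (S : R -> Prop) c d : singular C S -> c <> 0 ->
  singular C (fun z => S (c * z + d)).
Proof.
  intros HS Hc A [HA [a Ha]].
  assert (HA' : region C (img (fun x => c * x + d) A)).
  { split; [now apply affine_image_mem | now exists (c * a + d), a]. }
  destruct (HS _ HA') as (B & [HB [b Hb]] & HBA & HBS).
  exists (fun z => B (c * z + d)). repeat split.
  - apply (family_ext (img (fun x => / c * x + - d / c) B)).
    + apply affine_image_mem; auto. now apply Rinv_neq_0_compat.
    + intros z. split.
      * intros (x & Hx & ->). now replace (c * (/ c * x + - d / c) + d) with x by (field; auto).
      * intros Hz. exists (c * z + d). split; auto. field; auto.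
  - destruct (HBA b Hb) as (x & Hx & ->). now exists x.
  - intros z Hz. destruct (HBA _ Hz) as (x & Hx & E).
    replace z with x; auto. apply Rmult_eq_reg_l with c; auto. lra.
  - intros z [H1 H2]. apply (HBS (c * z + d)). auto.
Qed.

Lemma meager_affine_preimage (M : R -> Prop) c d : meager C M ->
  meager C (fun z => c <> 0 /\ M (c * z + d)).
Proof.
  intros HM. destruct (Req_dec c 0) as [-> | Hc].
  - apply (meager_subset _ M); [tauto | auto].
  - destruct HM as [S [HS HM]]. exists (fun n z => S n (c * z + d)). split.
    + intros n. now apply singular_affine_preimage.
    + intros z. rewrite <- HM. tauto.
Qed.

Hypothesis ab : abundant C (fun _ => True).

Lemma meager_not_all (M : R -> Prop) : meager C M -> exists a, ~ M a.
Proof.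
  intros HM. apply NNPP. intros H. apply ab. apply (meager_subset _ M); auto.
  intros z _. apply NNPP. intros Hz. apply H. eauto.
Qed.

Lemma R_not_countable : ~ countable (fun _ : R => True).
Proof.
  intros H. apply ab. apply enumerable_meager.
  now apply countable_enumerable; [exact (inhabits 0) |].
Qed.

(* The bad choices form a countable union of affine preimages of [M]. *)
Lemma exists_generic_point (M K : R -> Prop) : meager C M -> enumerable K ->
  exists a, ~ K a /\ forall e r, K e -> rational r -> r <> 0 -> ~ M (e + r * a).
Proof.
  intros HM HK. destruct enumerable_rational as [gQ HQ]. destruct HK as [gK HgK].
  set (bad := fun a => exists e r, K e /\ rational r /\ r <> 0 /\ M (e + r * a)).
  assert (Hbad : meager C bad).
  { apply (meager_subset _ (fun a => exists n,
      gQ (fst (of_nat n)) <> 0 /\ M (gQ (fst (of_nat n)) * a + gK (snd (of_nat n))))).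
    - intros a (e & r & He & Hr & Hr0 & HMa).
      destruct (HQ r Hr) as [i <-], (HgK e He) as [j <-].
      exists (to_nat (i, j)). rewrite cancel_of_to. simpl. now rewrite Rplus_comm.
    - apply meager_bigcup. intros n. now apply meager_affine_preimage. }
  destruct (meager_not_all _ (meager_setU _ _ (enumerable_meager K (ex_intro _ gK HgK)) Hbad))
    as [a Ha].
  exists a. split.
  - intros HKa. apply Ha. now left.
  - intros e r He Hr Hr0 HMa. apply Ha. right. exists e, r. auto.
Qed.

End Meager.

Lemma maximal_disjoint_subfamily (P : (R -> Prop) -> Prop) :
  exists D : (R -> Prop) -> Prop, (forall A, D A -> P A) /\ pairwise_disjoint D /\
    forall B, P B -> (exists x, B x) -> exists A x, D A /\ A x /\ B x.
Proof.
  destruct (ChoicePrinciples.zorn_union (R -> Prop)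
    (fun D => (forall A, D A -> P A) /\ pairwise_disjoint D)) as [D [[HDP HDdisj] Hmax]].
  - intros F HF Htot. split.
    + intros A (X & FX & XA). now apply (HF X FX).
    + intros A B (X & FX & XA) (Y & FY & YB).
      destruct (Htot X Y FX FY) as [H | H].
      * apply (proj2 (HF Y FY)); auto.
      * apply (proj2 (HF X FX)); auto.
  - exists D. split; [exact HDP | split; [exact HDdisj |]].
    intros B HB [x Hx]. apply NNPP. intros Hmiss.
    assert (HBD : forall A, D A -> disjoint A B).
    { intros A HA y [HAy HBy]. apply Hmiss. now exists A, y. }
    assert (HDB : D B).
    { apply (Hmax (setU D (set1 B))); [intros A HA; now left | split | now right].
      - intros A [HA | ->]; auto.
      - intros X Y [HX | ->] [HY | ->] XY; auto.
        + intros y [HXy HYy]. now apply (HBD Y HY y).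
        + now destruct XY. }
    apply Hmiss. now exists B, x.
Qed.

Section SingularCover.
Variable C : (R -> Prop) -> Prop.
Hypothesis cb : category_base C.
Hypothesis cc : ccc C.

Lemma countable_card_lt (D : (R -> Prop) -> Prop) :
  (forall A, D A -> C A) -> countable D -> ~ countable C -> card_lt D C.
Proof.
  intros HDC [g [_ Hg]] HC. split.
  - exists (fun A => A). split; auto.
  - intros [h [HhD Hh]]. apply HC. exists (fun A => g (h A)). split; [auto|].
    intros A B HA HB E. apply Hh; auto.
Qed.

Lemma singular_in_countable_complement S : singular C S ->
  exists D : (R -> Prop) -> Prop, countable D /\ (exists A, D A) /\
    (forall A, D A -> region C A /\ disjoint A S) /\ singular C (fun z => ~ bigunion D z).
Proof.
  intros HS.
  destruct (proj1 cb 0) as [A0 [HA0 H0]].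
  destruct (HS A0 (conj HA0 (ex_intro _ 0 H0))) as (B0 & HB0 & _ & HB0S).
  destruct (classic (countable C)) as [[g [_ Hg]] | HC].
  - exists (fun A => region C A /\ disjoint A S). split; [|split; [|split]].
    + exists g. split; [auto|]. intros A B [[HA _] _] [[HB _] _]. auto.
    + now exists B0.
    + intros A HA. exact HA.
    + intros A HA. destruct (HS A HA) as (B & HB & HBA & HBS).
      exists B. split; [exact HB | split; [exact HBA |]].
      intros z [HBz Hz]. apply Hz. now exists B.
  - destruct (maximal_disjoint_subfamily (fun A => region C A /\ disjoint A S))
      as (D & HDP & HDdisj & HDmax).
    assert (HDc : countable D) by (apply cc; [intros A HA; apply HDP |]; auto).
    assert (HDne : exists A, D A).
    { destruct (HDmax B0 (conj HB0 HB0S) (proj2 HB0)) as (A & _ & HA & _). now exists A. }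
    exists D. split; [exact HDc | split; [exact HDne | split; [exact HDP |]]].
    intros A HA.
    assert (HDreg : forall B, D B -> region C B) by (intros B HB; apply HDP, HB).
    destruct (proj2 cb A D HA HDne HDreg HDdisj
                (countable_card_lt D (fun B HB => proj1 (HDreg B HB)) HDc HC))
      as [Hmeets Hmisses].
    destruct (classic (contains_region C (fun x => A x /\ bigunion D x))) as [Hin | Hout].
    + destruct (Hmeets Hin) as (B & HB & B' & HB' & HB'AB).
      exists B'. split; [exact HB' | split].
      * intros z Hz. apply (HB'AB z Hz).
      * intros z [Hz Hn]. apply Hn. exists B. split; [exact HB | apply (HB'AB z Hz)].
    + (* a region in [A] missing every member of [D] would contradict maximality *)
      exfalso. destruct (Hmisses Hout) as (B & HB & _ & HBD).
      destruct (HS B HB) as (B' & HB' & HB'B & HB'S).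
      destruct (HDmax B' (conj HB' HB'S) (proj2 HB')) as (E & y & HE & HEy & HB'y).
      apply (HBD E HE y). auto.
Qed.

Variable f : (R -> Prop) -> R.
Hypothesis f_inj : forall A B, C A -> C B -> f A = f B -> A = B.
Variable dec : R -> nat -> R.
Hypothesis dec_onto : forall h, exists t, dec t = h.

(* [t] codes the countable family of regions [A] whose code [f A] occurs in [dec t]. *)
Definition coded_complement (t : R) : R -> Prop :=
  fun z => ~ exists A, C A /\ (exists n, f A = dec t n) /\ A z.

Definition coded_singular (t : R) : R -> Prop :=
  fun z => singular C (coded_complement t) /\ coded_complement t z.

Lemma coded_singular_singular t : singular C (coded_singular t).
Proof.
  destruct (classic (singular C (coded_complement t))) as [H | H].
  - apply (singular_subset C _ _ (fun z Hz => proj2 Hz) H).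
  - intros A HA. exists A. split; [exact HA | split; [intros z Hz; exact Hz |]].
    intros z [_ [Hs _]]. contradiction.
Qed.

Lemma coded_singular_covers S : singular C S -> exists t, subset S (coded_singular t).
Proof.
  intros HS.
  destruct (singular_in_countable_complement S HS) as (D & HDc & [A0 HA0] & HDS & HDsing).
  destruct (enumerable_exact D A0 HA0 (countable_enumerable D (inhabits A0) HDc))
    as (d & Hd & Hdonto).
  destruct (dec_onto (fun n => f (d n))) as [t Ht].
  assert (Hcompl : forall z, coded_complement t z <-> ~ bigunion D z).
  { intros z. unfold coded_complement. rewrite Ht. split.
    - intros Hz (A & HA & HAz). apply Hz. destruct (Hdonto A HA) as [n <-].
      exists (d n). split; [exact (proj1 (proj1 (HDS _ HA))) | split; [now exists n | exact HAz]].
    - intros Hz (A & HA & [n Hn] & HAz). apply Hz. exists (d n). split; auto.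
      replace (d n) with A; auto. apply f_inj; auto. apply HDS, Hd. }
  exists t. intros z Hz. split.
  - apply (singular_subset C _ _ (fun z => proj1 (Hcompl z)) HDsing).
  - apply Hcompl. intros (A & HA & HAz). apply (proj2 (HDS A HA) z). auto.
Qed.

End SingularCover.

Lemma singular_cofinal_family C : category_base C -> ccc C ->
  card_le C (fun _ : R => True) ->
  exists Sing : R -> R -> Prop, (forall t, singular C (Sing t)) /\
    forall S, singular C S -> exists t, subset S (Sing t).
Proof.
  intros cb cc [f [_ f_inj]]. destruct R_onto_sequences as [dec dec_onto].
  exists (coded_singular C f dec). split.
  - apply coded_singular_singular.
  - apply coded_singular_covers; auto.
Qed.

Definition strict_well_order {T} (lt : T -> T -> Prop) : Prop :=
  well_founded lt /\ forall s t, s <> t -> lt s t \/ lt t s.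

Lemma well_founded_acyclic {T} (lt : T -> T -> Prop) :
  well_founded lt -> forall a, ~ clos_trans T lt a a.
Proof.
  intros Hwf a. induction (wf_clos_trans T lt Hwf a) as [a _ IH].
  intros Ha. exact (IH a Ha Ha).
Qed.

Lemma strict_well_order_trans {T} (lt : T -> T -> Prop) : strict_well_order lt ->
  forall r s t, lt r s -> lt s t -> lt r t.
Proof.
  intros [Hwf Htot] r s t Hrs Hst.
  assert (Hrst : clos_trans T lt r t) by (apply t_trans with s; now apply t_step).
  destruct (classic (r = t)) as [-> | Hrt].
  - now destruct (well_founded_acyclic lt Hwf t).
  - destruct (Htot r t Hrt) as [H | H]; auto.
    destruct (well_founded_acyclic lt Hwf r). apply t_trans with t; auto. now apply t_step.
Qed.

Lemma well_founded_minimal {T} (lt : T -> T -> Prop) (P : T -> Prop) :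
  well_founded lt -> forall a, P a -> exists m, P m /\ forall x, lt x m -> ~ P x.
Proof.
  intros Hwf a. induction (Hwf a) as [a _ IH]. intros Ha.
  destruct (classic (exists x, lt x a /\ P x)) as [(x & Hxa & Hx) | Hmin].
  - exact (IH x Hxa Hx).
  - exists a. split; auto. intros x Hxa Hx. apply Hmin. now exists x.
Qed.

Lemma strict_well_order_inverse_image {A T} (lt : T -> T -> Prop) (g : A -> T) :
  strict_well_order lt -> (forall x y, g x = g y -> x = y) ->
  strict_well_order (fun x y => lt (g x) (g y)).
Proof.
  intros [Hwf Htot] Hg. split.
  - now apply wf_inverse_image.
  - intros s t Hst. apply Htot. intros E. now apply Hst, Hg.
Qed.

Lemma exists_strict_well_order (T : Type) : exists lt : T -> T -> Prop, strict_well_order lt.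
Proof.
  destruct (ChoicePrinciples.well_ordering T) as [W [Hmin Hanti]].
  exists (fun x y => W x y /\ x <> y). split.
  - intros a. apply NNPP. intros Ha.
    destruct (Hmin (fun x => ~ Acc _ x) (ex_intro _ a Ha)) as [z [Hz Hzmin]].
    apply Hz. constructor. intros y [Wyz Hyz]. apply NNPP. intros Hy.
    apply Hyz, Hanti; auto.
  - intros s t Hst.
    destruct (Hmin (fun z => z = s \/ z = t) (ex_intro _ s (or_introl eq_refl)))
      as [z [[-> | ->] Hz]].
    + left. split; auto.
    + right. split; auto.
Qed.

(* Under CH the first element with an uncountable initial segment is mapped injectively
   below itself, which makes every initial segment countable. *)
Lemma CH_omega1_order : CH ->
  exists lt : R -> R -> Prop, strict_well_order lt /\ forall t, countable (fun s => lt s t).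
Proof.
  intros ch. destruct (exists_strict_well_order R) as [lt0 Hlt0].
  destruct (classic (forall t, countable (fun s => lt0 s t))) as [Hall | Hsome].
  { now exists lt0. }
  apply not_all_ex_not in Hsome as [p0 Hp0].
  destruct (well_founded_minimal lt0 (fun t => ~ countable (fun s => lt0 s t)) (proj1 Hlt0) p0 Hp0)
    as [p [Hp Hpmin]].
  destruct (ch (fun s => lt0 s p)) as [Hc | [g [Hgp Hg]]]; [contradiction|].
  assert (Hginj : forall x y, g x = g y -> x = y) by (intros x y; now apply Hg).
  exists (fun x y => lt0 (g x) (g y)). split.
  - now apply strict_well_order_inverse_image.
  - intros t. destruct (NNPP _ (Hpmin (g t) (Hgp t I))) as [h [_ Hh]].
    exists (fun s => h (g s)). split; [auto|].
    intros x y Hx Hy E. now apply Hginj, Hh.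
Qed.

Section Construction.
Variable C : (R -> Prop) -> Prop.
Hypothesis pm : point_meager C.
Hypothesis li : linearly_invariant C.
Hypothesis ab : abundant C (fun _ => True).
Variable Sing : R -> R -> Prop.
Hypothesis Sing_singular : forall t, singular C (Sing t).
Hypothesis Sing_cofinal : forall S, singular C S -> exists t, subset S (Sing t).
Variable lt : R -> R -> Prop.
Hypothesis lt_order : strict_well_order lt.
Hypothesis lt_countable : forall t, countable (fun s => lt s t).

Lemma enumerable_segment t : enumerable (fun s => lt s t).
Proof. apply countable_enumerable; [exact (inhabits 0) | apply lt_countable]. Qed.

Definition Sing_upto (t : R) : R -> Prop := fun z => exists s, (lt s t \/ s = t) /\ Sing s z.

Lemma Sing_upto_meager t : meager C (Sing_upto t).
Proof.
  destruct (enumerable_setU _ _ (enumerable_segment t) (enumerable_set1 t)) as [g Hg].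
  apply (meager_subset C _ (fun z => exists n, Sing (g n) z)).
  - intros z (s & Hs & Hz). destruct (Hg s Hs) as [n <-]. now exists n.
  - apply meager_bigcup. intros n. apply singular_meager, Sing_singular.
Qed.

Lemma Sing_upto_mono s t z : lt s t -> Sing_upto s z -> Sing_upto t z.
Proof.
  intros Hst (r & Hr & Hz). exists r. split; auto. left.
  destruct Hr as [Hrs | ->]; auto. now apply (strict_well_order_trans lt lt_order r s t).
Qed.

Definition avoids (t : R) (X : R -> Prop) (a : R) : Prop :=
  forall e r, span X e -> rational r -> r <> 0 -> ~ Sing_upto t (e + r * a).

Definition admissible (t : R) (X Y : R -> Prop) (a b : R) : Prop :=
  ~ span (setU X Y) b /\ ~ span (setU (setU X Y) (set1 b)) a /\
  (exists e g, span (setU X (set1 a)) e /\ span (setU Y (set1 b)) g /\ t = e + g) /\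
  avoids t X a /\ avoids t Y b.

Lemma admissible_in_span t X Y : enumerable X -> enumerable Y ->
  span (setU X Y) t -> exists a b, admissible t X Y a b.
Proof.
  intros HX HY Ht.
  destruct (exists_generic_point C pm li ab (Sing_upto t) (span (setU X Y))
    (Sing_upto_meager t) (enumerable_span _ (enumerable_setU _ _ HX HY))) as (b & Hb & Hbgen).
  destruct (exists_generic_point C pm li ab (Sing_upto t) (span (setU (setU X Y) (set1 b)))
    (Sing_upto_meager t)
    (enumerable_span _ (enumerable_setU _ _ (enumerable_setU _ _ HX HY) (enumerable_set1 b))))
    as (a & Ha & Hagen).
  exists a, b. split; [exact Hb | split; [exact Ha | split; [| split]]].
  - apply span_setU in Ht as (e & g & He & Hg & ->). exists e, g.
    split; [| split]; auto.
    + apply (span_mono X); auto. intros v Hv. now left.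
    + apply (span_mono Y); auto. intros v Hv. now left.
  - intros e r He. apply Hagen. apply (span_mono X); auto.
    intros v Hv. left. now left.
  - intros g r Hg. apply Hbgen. apply (span_mono Y); auto. intros v Hv. now right.
Qed.

Lemma admissible_not_in_span t X Y : enumerable X -> enumerable Y ->
  ~ span (setU X Y) t -> exists a b, admissible t X Y a b.
Proof.
  intros HX HY Ht.
  set (K := span (setU (setU X Y) (set1 t))).
  destruct (exists_generic_point C pm li ab (Sing_upto t) K (Sing_upto_meager t)
    (enumerable_span _ (enumerable_setU _ _ (enumerable_setU _ _ HX HY) (enumerable_set1 t))))
    as (a & Ha & Hagen).
  assert (HXY : forall e, span (setU X Y) e -> K e).
  { intros e He. apply (span_mono (setU X Y)); auto. intros v Hv. now left. }
  exists a, (t - a). split; [| split; [| split; [| split]]].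
  - intros Hb. apply Ha. apply span_setU1. exists (- (t - a)), 1.
    split; [| split; [apply rational1 | ring]].
    replace (- (t - a)) with (0 - (t - a)) by ring. apply span_sub; [constructor | exact Hb].
  - intros Hab. apply span_setU1 in Hab as (e & r & He & Hr & E).
    destruct (Req_dec (1 + r) 0) as [Hr1 | Hr1].
    + apply Ht. replace t with e by (assert (r = -1) by lra; subst r; lra). exact He.
    + apply Ha. apply span_setU1. exists (/ (1 + r) * e), (r / (1 + r)).
      assert (Hr1q : rational (1 + r)) by (apply rational_add; auto using rational1).
      split; [| split].
      * apply span_scale; auto. now apply rational_inv.
      * apply rational_mul; auto. now apply rational_inv.
      * apply Rmult_eq_reg_l with (1 + r); auto. field_simplify; auto. lra.
  - exists a, (t - a). split; [| split; [| ring]]; apply span_incl; now right.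
  - intros e r He. apply Hagen. apply HXY, (span_mono X); auto. intros v Hv. now left.
  - intros g r Hg Hr Hr0 HM. apply (Hagen (g + r * t) (- r)).
    + apply span_add.
      * apply HXY, (span_mono Y); auto. intros v Hv. now right.
      * apply span_scale; auto. apply span_incl. now right.
    + now apply rational_opp.
    + lra.
    + replace (g + r * t + - r * a) with (g + r * (t - a)) by ring. exact HM.
Qed.

Lemma admissible_exists t X Y : enumerable X -> enumerable Y ->
  exists p : R * R, admissible t X Y (fst p) (snd p).
Proof.
  intros HX HY.
  destruct (classic (span (setU X Y) t)) as [Ht | Ht].
  - destruct (admissible_in_span t X Y HX HY Ht) as (a & b & H). now exists (a, b).
  - destruct (admissible_not_in_span t X Y HX HY Ht) as (a & b & H). now exists (a, b).
Qed.

Definition admissible_step (t : R) (h : forall s, lt s t -> R * R) : R * R :=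
  epsilon (inhabits (0, 0)) (fun p =>
    admissible t (fun v => exists s (H : lt s t), v = fst (h s H))
                 (fun v => exists s (H : lt s t), v = snd (h s H)) (fst p) (snd p)).

Definition xyseq : R -> R * R := Fix (proj1 lt_order) (fun _ => (R * R)%type) admissible_step.
Definition xseq (t : R) : R := fst (xyseq t).
Definition yseq (t : R) : R := snd (xyseq t).

Definition below (w : R -> R) (t : R) : R -> Prop := img w (fun s => lt s t).
Definition upto (w : R -> R) (t : R) : R -> Prop := setU (below w t) (set1 (w t)).

Lemma xyseq_admissible t : admissible t (below xseq t) (below yseq t) (xseq t) (yseq t).
Proof.
  assert (Hext : forall t' (h1 h2 : forall s, lt s t' -> R * R),
    (forall s H, h1 s H = h2 s H) -> admissible_step t' h1 = admissible_step t' h2).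
  { intros t' h1 h2 Hh. f_equal.
    apply functional_extensionality_dep; intro s.
    apply functional_extensionality_dep; intro H. apply Hh. }
  assert (Hfix : xyseq t = admissible_step t (fun s _ => xyseq s))
    by exact (Fix_eq _ _ _ Hext t).
  assert (Hbelow : forall w : R * R -> R,
    (fun v => exists s (_ : lt s t), v = w (xyseq s)) =
    img (fun s => w (xyseq s)) (fun s => lt s t)).
  { intros w. apply functional_extensionality; intro v. apply propositional_extensionality.
    split; intros (s & H & E).
    - exists s. now split.
    - now exists s, H. }
  unfold xseq at 2, yseq at 2. rewrite Hfix. unfold admissible_step. rewrite !Hbelow.
  apply (epsilon_spec (inhabits (0, 0))
    (fun p => admissible t (below xseq t) (below yseq t) (fst p) (snd p))).
  apply admissible_exists; apply enumerable_img, enumerable_segment.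
Qed.

Lemma upto_below w s t v : lt s t -> upto w s v -> below w t v.
Proof.
  intros Hst [(r & Hrs & ->) | ->].
  - exists r. split; auto. now apply (strict_well_order_trans lt lt_order r s t).
  - now exists s.
Qed.

Lemma span_upto_mono w s t z : lt s t -> span (upto w s) z -> span (upto w t) z.
Proof.
  intros Hst. apply span_mono. intros v Hv. left. now apply (upto_below w s).
Qed.

Lemma span_img_directed w P z :
  span (img w P) z -> z = 0 \/ exists t, P t /\ span (upto w t) z.
Proof.
  induction 1 as [|r v z Hr (s & Hs & ->) Hz [-> | (t & Ht & Hzt)]]; auto; right.
  - exists s. split; auto. apply span_cons; [auto | now right | constructor].
  - destruct (classic (s = t)) as [<- | Hst].
    + exists s. split; auto. apply span_cons; auto. now right.
    + destruct (proj2 lt_order s t Hst) as [Hlt | Hlt].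
      * exists t. split; auto. apply span_cons; auto. left. now exists s.
      * exists s. split; auto. apply span_cons; auto; [now right |].
        now apply (span_upto_mono w t s).
Qed.

Lemma span_img_common w1 w2 P z : span (img w1 P) z -> span (img w2 P) z ->
  z = 0 \/ exists t, P t /\ span (upto w1 t) z /\ span (upto w2 t) z.
Proof.
  intros H1 H2.
  destruct (span_img_directed w1 P z H1) as [-> | (t1 & Ht1 & Hz1)]; auto.
  destruct (span_img_directed w2 P z H2) as [-> | (t2 & Ht2 & Hz2)]; auto.
  right. destruct (classic (t1 = t2)) as [<- | Hne]; [now exists t1 |].
  destruct (proj2 lt_order t1 t2 Hne) as [Hlt | Hlt].
  - exists t2. split; [| split]; auto. now apply (span_upto_mono w1 t1).
  - exists t1. split; [| split]; auto. now apply (span_upto_mono w2 t2).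
Qed.

Lemma upto_trivial_meet t z : span (upto xseq t) z -> span (upto yseq t) z -> z = 0.
Proof.
  revert z. induction t as [t IH] using (well_founded_ind (proj1 lt_order)).
  destruct (xyseq_admissible t) as (Hy & Hx & _).
  apply (span_extend_trivial_meet (below xseq t) (below yseq t) (xseq t) (yseq t)); auto.
  intros z Hz1 Hz2.
  destruct (span_img_common xseq yseq _ z Hz1 Hz2) as [-> | (s & Hs & H1 & H2)]; auto.
  now apply (IH s).
Qed.

(* An element of [Sing_upto t] cannot involve a generator [w t'] with [t <= t'], since
   [avoids] excludes exactly this at stage [t']. *)
Lemma span_below_of_Sing_upto w : (forall t, avoids t (below w t) (w t)) ->
  forall t' t z, span (upto w t') z -> Sing_upto t z -> span (below w t) z.
Proof.
  intros Hav t'. induction t' as [t' IH] using (well_founded_ind (proj1 lt_order)).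
  intros t z Hz HM.
  destruct (classic (lt t' t)) as [Hlt | Hnlt].
  { apply (span_mono (upto w t')); auto. intros v. now apply upto_below. }
  apply span_setU1 in Hz as (e & r & He & Hr & ->).
  destruct (Req_dec r 0) as [-> | Hr0].
  - rewrite Rmult_0_l, Rplus_0_r in *.
    destruct (span_img_directed w _ e He) as [-> | (s & Hs & Hes)]; [constructor |].
    now apply (IH s).
  - exfalso. apply (Hav t' e r He Hr Hr0).
    destruct (classic (t = t')) as [<- | Hne]; auto.
    destruct (proj2 lt_order t t' Hne) as [Hlt | Hlt]; [| contradiction].
    now apply (Sing_upto_mono t).
Qed.

Lemma injective_of_not_span_below w : (forall t, ~ span (below w t) (w t)) ->
  forall s t, w s = w t -> s = t.
Proof.
  intros Hnew s t E. apply NNPP. intros Hst.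
  destruct (proj2 lt_order s t Hst) as [Hlt | Hlt].
  - apply (Hnew t). rewrite <- E. apply span_incl. now exists s.
  - apply (Hnew s). rewrite E. apply span_incl. now exists t.
Qed.

Definition span_range (w : R -> R) : R -> Prop := span (img w (fun _ => True)).

Lemma rare_span_range w : (forall t, avoids t (below w t) (w t)) ->
  (forall t, ~ span (below w t) (w t)) -> rare C (span_range w).
Proof.
  intros Hav Hnew. split.
  - intros [h [_ Hh]]. apply (R_not_countable C pm ab).
    exists (fun t => h (w t)). split; auto.
    intros s t _ _ E. apply (injective_of_not_span_below w Hnew).
    apply Hh; auto; apply span_incl; eexists; eauto.
  - intros M [S [HS HM]].
    destruct (choice _ (fun n => Sing_cofinal (S n) (HS n))) as [tn Htn].
    apply enumerable_countable.
    apply (enumerable_subset _ (fun z => exists n, span (below w (tn n)) z)).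
    + intros z [Hz HMz]. destruct (proj1 (HM z) HMz) as [n Hn]. exists n.
      destruct (span_img_directed w _ z Hz) as [-> | (t' & _ & Hzt')]; [constructor |].
      apply (span_below_of_Sing_upto w Hav t'); auto.
      exists (tn n). split; [now right | now apply Htn].
    + apply enumerable_bigcup. intros n.
      apply enumerable_span, enumerable_img, enumerable_segment.
Qed.

Lemma span_range_Q_subspace w : Q_subspace (span_range w).
Proof.
  split; [constructor | split].
  - intros u v. apply span_add.
  - intros q z Hz. apply span_scale; auto. now exists q.
Qed.

Lemma span_upto_range w t z : span (upto w t) z -> span_range w z.
Proof. apply span_mono. intros v [(s & _ & ->) | ->]; [now exists s | now exists t]. Qed.

Lemma exists_rare_complementary_subspaces : exists E F : R -> Prop,
  rare C E /\ rare C F /\ Q_subspace E /\ Q_subspace F /\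
  (forall z, exists e f, E e /\ F f /\ z = e + f) /\ (forall z, (E z /\ F z) <-> z = 0).
Proof.
  exists (span_range xseq), (span_range yseq).
  split; [| split; [| split; [| split; [| split]]]].
  - apply rare_span_range; intros t; destruct (xyseq_admissible t) as (_ & Hx & _ & Hav & _).
    + exact Hav.
    + intros Hxt. apply Hx. apply (span_mono (below xseq t)); auto. intros v Hv. now left; left.
  - apply rare_span_range; intros t; destruct (xyseq_admissible t) as (Hy & _ & _ & _ & Hav).
    + exact Hav.
    + intros Hyt. apply Hy. apply (span_mono (below yseq t)); auto. intros v Hv. now right.
  - apply span_range_Q_subspace.
  - apply span_range_Q_subspace.
  - intros z. destruct (xyseq_admissible z) as (_ & _ & (e & g & He & Hg & E) & _).
    exists e, g. split; [| split]; auto; eapply span_upto_range; eauto.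
  - intros z. split.
    + intros [Hx Hy].
      destruct (span_img_common xseq yseq _ z Hx Hy) as [-> | (t & _ & H1 & H2)]; auto.
      now apply (upto_trivial_meet t).
    + intros ->. split; constructor.
Qed.

End Construction.

Theorem theorem2p5 (C : (R -> Prop) -> Prop) :
  CH ->
  category_base C ->
  point_meager C ->
  ccc C ->
  linearly_invariant C ->
  card_le C (fun _ : R => True) ->
  abundant C (fun _ : R => True) ->
  exists E F : R -> Prop,
    rare C E /\ rare C F /\
    Q_subspace E /\ Q_subspace F /\
    (forall z : R, exists e f, E e /\ F f /\ z = e + f) /\
    (forall x : R, (E x /\ F x) <-> x = 0).
Proof.
  intros ch cb pm cc li Hcard ab.
  destruct (singular_cofinal_family C cb cc Hcard) as (Sing & HSing & HSing_cofinal).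
  destruct (CH_omega1_order ch) as (lt & Hlt & Hlt_countable).
  exact (exists_rare_complementary_subspaces C pm li ab Sing HSing HSing_cofinal
           lt Hlt Hlt_countable).
Qed.
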